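(* Let $f:\mathbb{R}^n\times\mathbb{R}^p\times\mathbb{R}^q\to\mathbb{R}^n$ be continuously differentiable, let $N:\mathbb{R}^n\to\mathbb{R}^p$ be a neural network controller, and $f^{\mathsf c}(x,w)=f(x,N(x),w)$. Let $T\in\mathbb{R}^{n\times n}$ be invertible, $\Phi(x)=Tx$, and define the transformed system $\dot y=g^{\mathsf c}(y,w):=Tf(T^{-1}y,N'(y),w)$ with $N'(y):=N(T^{-1}y)$. Fix an interval $[\underline z,\overline z]\subseteq\mathbb{R}^n$ and $[\underline w,\overline w]\subseteq\mathbb{R}^q$. Let $(C,\underline d,\overline d)$ be a local affine bound of $N$ on $[\underline z,\overline z]$ and $[\underline u,\overline u]$ with $\underline u=C^+\underline z+C^-\overline z+\underline d$, $\overline u=C^-\underline z+C^+\overline z+\overline d$. Let $[\mathsf J_x]\in\mathbb{IR}^{n\times n}$, $[\mathsf J_u]\in\mathbb{IR}^{n\times p}$, $[\mathsf J_w]\in\mathbb{IR}^{n\times q}$ be interval matrices such that $D_xf(x,u,w)\in[\mathsf J_x]$, $D_uf(x,u,w)\in[\mathsf J_u]$, $D_wf(x,u,w)\in[\mathsf J_w]$ for all $(x,u,w)\in[\underline z,\overline z]\times[\underline u,\overline u]\times[\underline w,\overline w]$. Fix $\mathring x\in[\underline z,\overline z]$, $\mathring u=N(\mathring x)$, $\mathring w\in[\underline w,\overline w]$, and let $[\mathsf R]:=-[\mathsf J_x]\mathring x-[\mathsf J_u]\mathring u+[\mathsf J_w]([\underline w,\overline w]-\mathring w)+f(\mathring x,\mathring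 u,\mathring w)$ (interval arithmetic). For an interval $[\underline y,\overline y]$ let $(C',\underline d',\overline d')$ be a local affine bound of $N'$ on $[\underline y,\overline y]$, and define $$[\mathsf G^{\mathsf c}(\underline y,\overline y,\underline w,\overline w)]:=T\Big(\big([\mathsf J_x]+[\mathsf J_u](C'T)\big)\big(T^{-1}[\underline y,\overline y]\big)\Big)+T\big([\mathsf J_u][\underline d',\overline d']\big)+T[\mathsf R],$$ evaluated in interval arithmetic (real matrices/vectors treated as degenerate intervals). Then $\mathsf G^{\mathsf c}$ is a $\Phi([\underline z,\overline z])$-localized inclusion function for $g^{\mathsf c}$: for every interval $[\underline y,\overline y]\subseteq\Phi([\underline z,\overline z])=\{Tx:x\in[\underline z,\overline z]\}$, every $y\in[\underline y,\overline y]$ and every $w\in[\underline w,\overline w]$, $g^{\mathsf c}(y,w)\in[\mathsf G^{\mathsf c}(\underline y,\overline y,\underline w,\overline w)]$.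
   Context: Interval arithmetic: $\mathbb{IR}^{m}$ (resp. $\mathbb{IR}^{m\times k}$) denotes intervals (interval matrices) $[\underline A,\overline A]=\{A:\underline A\le A\le\overline A\}$ entrywise. Operations: $[\underline a,\overline a]+[\underline b,\overline b]=[\underline a+\underline b,\overline a+\overline b]$ (entrywise for vectors/matrices); $[\underline a,\overline a]\cdot[\underline b,\overline b]=[\min S,\max S]$ with $S=\{\underline a\underline b,\underline a\overline b,\overline a\underline b,\overline a\overline b\}$; $([A][B])_{ij}=\sum_k[A]_{ik}\cdot[B]_{kj}$. A real number $c$ is the interval $[c,c]$; subtracting a real vector shifts the interval. Neural network: $N(x)=W^{(k)}\xi^{(k)}+b^{(k)}$, $\xi^{(0)}=x$, $\xi^{(i)}=\phi^{(i-1)}(W^{(i-1)}\xi^{(i-1)}+b^{(i-1)})$, with diagonal activations satisfying $0\le(\phi_j(a)-\phi_j(b))/(a-b)\le1$. Local affine bound: for an interval $[\underline\xi,\overline\xi]$, a tuple $(C,\underline d,\overline d)$ with $Cx+\underline d\le N(x)\le Cx+\overline d$ for every $x\in[\underline\xi,\overline\xi]$ (such bounds are assumed available, e.g. from CROWN). For a matrix $C$, $C^+_{ij}=\max(C_{ij},0)$ and $C^-=C-C^+$. An $\mathcal S$-localized inclusion function $\mathsf G$ for $g^{\mathsf c}$ is one whose interval output contains $g^{\mathsf c}(y,w)$ for all $y\in[\underline y,\overline y]$, $w\in[\underline w,\overline w]$, whenever $[\underline y,\overline y]\subseteq\mathcal S$. *)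

From HB Require Import structures.
From mathcomp Require Import all_boot all_order all_algebra.
From mathcomp Require Import boolp classical_sets reals topology normedtype derive.
Set Implicit Arguments. Unset Strict Implicit. Unset Printing Implicit Defensive.
Import Order.TTheory GRing.Theory Num.Theory.
Import numFieldNormedType.Exports.
Local Open Scope ring_scope.

Section Defs.
Variable R : realType.

Definition lemx m k (A B : 'M[R]_(m, k)) : Prop := forall i j, A i j <= B i j.

(* an interval matrix [lo, hi] is represented by the pair (lo, hi) *)
Definition imx m k := ('M[R]_(m, k) * 'M[R]_(m, k))%type.

Definition in_imx m k (A : 'M[R]_(m, k)) (I : imx m k) : Prop :=
  lemx I.1 A /\ lemx A I.2.

Definition pt m k (A : 'M[R]_(m, k)) : imx m k := (A, A).

Definition iprod (a b : R * R) : R * R :=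
  let s1 := a.1 * b.1 in let s2 := a.1 * b.2 in
  let s3 := a.2 * b.1 in let s4 := a.2 * b.2 in
  (Num.min (Num.min s1 s2) (Num.min s3 s4),
   Num.max (Num.max s1 s2) (Num.max s3 s4)).

Definition imx_add m k (A B : imx m k) : imx m k := (A.1 + B.1, A.2 + B.2).

Definition imx_opp m k (A : imx m k) : imx m k := (- A.2, - A.1).

Definition imx_mul m l k (A : imx m l) (B : imx l k) : imx m k :=
  (\matrix_(i, j) \sum_(r < l) (iprod (A.1 i r, A.2 i r) (B.1 r j, B.2 r j)).1,
   \matrix_(i, j) \sum_(r < l) (iprod (A.1 i r, A.2 i r) (B.1 r j, B.2 r j)).2).

Definition in_box m (x lo hi : 'cV[R]_m) : Prop := lemx lo x /\ lemx x hi.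

Definition posm m k (C : 'M[R]_(m, k)) : 'M[R]_(m, k) :=
  map_mx (fun c => Num.max c 0) C.
Definition negm m k (C : 'M[R]_(m, k)) : 'M[R]_(m, k) := C - posm C.

Definition local_affine_bound m k (N : 'cV[R]_m -> 'cV[R]_k) (lo hi : 'cV[R]_m)
  (C : 'M[R]_(k, m)) (dlo dhi : 'cV[R]_k) : Prop :=
  forall x, in_box x lo hi -> lemx (C *m x + dlo) (N x) /\ lemx (N x) (C *m x + dhi).

Definition nn_dim (n : nat) (d : nat -> nat) (i : nat) : nat :=
  match i with 0 => n | i'.+1 => d i' end.

Fixpoint nn_xi (n : nat) (d : nat -> nat)
  (W : forall i, 'M[R]_(nn_dim n d i.+1, nn_dim n d i))
  (b : forall i, 'cV[R]_(nn_dim n d i.+1))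
  (phi : forall i, 'I_(nn_dim n d i.+1) -> R -> R)
  (x : 'cV[R]_n) (i : nat) : 'cV[R]_(nn_dim n d i) :=
  match i return 'cV[R]_(nn_dim n d i) with
  | 0 => x
  | i'.+1 => \col_j phi i' j ((W i' *m nn_xi W b phi x i' + b i') j 0)
  end.

Definition is_nn n p (N : 'cV[R]_n -> 'cV[R]_p) : Prop :=
  exists (k : nat) (d : nat -> nat)
    (W : forall i, 'M[R]_(nn_dim n d i.+1, nn_dim n d i))
    (b : forall i, 'cV[R]_(nn_dim n d i.+1))
    (phi : forall i, 'I_(nn_dim n d i.+1) -> R -> R)
    (Wk : 'M[R]_(p, nn_dim n d k)) (bk : 'cV[R]_p),
    (forall i, (i < k)%N -> forall j (a c : R), a != c ->
        0 <= (phi i j a - phi i j c) / (a - c) <= 1) /\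
    (forall x, N x = Wk *m nn_xi W b phi x k + bk).

(* Jacobian matrix (rows = output components, columns = input components) *)
Definition jac m k (g : 'cV[R]_m -> 'cV[R]_k) (a : 'cV[R]_m) : 'M[R]_(k, m) :=
  \matrix_(i, j) ('d g a (delta_mx j 0)) i 0.

Definition Dx n p q (f : 'cV[R]_n -> 'cV[R]_p -> 'cV[R]_q -> 'cV[R]_n) x u w :=
  jac (fun x' => f x' u w) x.
Definition Du n p q (f : 'cV[R]_n -> 'cV[R]_p -> 'cV[R]_q -> 'cV[R]_n) x u w :=
  jac (fun u' => f x u' w) u.
Definition Dw n p q (f : 'cV[R]_n -> 'cV[R]_p -> 'cV[R]_q -> 'cV[R]_n) x u w :=
  jac (fun w' => f x u w') w.

(* f continuously differentiable on R^n x R^p x R^q: differentiable everywhere,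
   and its derivative is continuous (tested on each direction; finite dim.) *)
Definition C1 n p q (f : 'cV[R]_n -> 'cV[R]_p -> 'cV[R]_q -> 'cV[R]_n) : Prop :=
  let F := fun z : 'cV[R]_n * 'cV[R]_p * 'cV[R]_q => f z.1.1 z.1.2 z.2 in
  (forall z, differentiable F z) /\ (forall v, continuous (fun z => 'd F z v)).

Definition Rbox n p q (f : 'cV[R]_n -> 'cV[R]_p -> 'cV[R]_q -> 'cV[R]_n)
  (Jx : imx n n) (Ju : imx n p) (Jw : imx n q)
  (xo : 'cV[R]_n) (uo : 'cV[R]_p) (wo wlo whi : 'cV[R]_q) : imx n 1 :=
  imx_add
    (imx_add
      (imx_add (imx_opp (imx_mul Jx (pt xo))) (imx_opp (imx_mul Ju (pt uo))))
      (imx_mul Jw (imx_add (wlo, whi) (pt (- wo)))))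
    (pt (f xo uo wo)).

Definition Gc n p (T : 'M[R]_n) (Jx : imx n n) (Ju : imx n p) (Rv : imx n 1)
  (C' : 'M[R]_(p, n)) (dlo' dhi' : 'cV[R]_p) (ylo yhi : 'cV[R]_n) : imx n 1 :=
  imx_add
    (imx_add
      (imx_mul (pt T)
        (imx_mul (imx_add Jx (imx_mul Ju (pt (C' *m T))))
                 (imx_mul (pt (invmx T)) (ylo, yhi))))
      (imx_mul (pt T) (imx_mul Ju (dlo', dhi'))))
    (imx_mul (pt T) Rv).

End Defs.

From HB Require Import structures.
From mathcomp Require Import all_boot all_order all_algebra.
From mathcomp Require Import boolp classical_sets functions reals topology normedtype derive.
From mathcomp Require Import ring lra.
Set Implicit Arguments. Unset Strict Implicit. Unset Printing Implicit Defensive.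
Import Order.TTheory GRing.Theory Num.Theory.
Import numFieldNormedType.Exports.
Local Open Scope classical_set_scope.
Local Open Scope ring_scope.

(** Idea: fix [y] and [w] and put [x := T^-1 y], [u := N' y]. The mean value
theorem, applied row by row and variable by variable, writes
[f x u w - f xo uo wo = Jx'(x - xo) + Ju'(u - uo) + Jw'(w - wo)] with real
matrices [Jx'], [Ju'], [Jw'] lying in the interval Jacobians, because the
segments used stay in the box where these enclose the derivatives.
Substituting [u = C' y + d] with [d := u - C' y] in [[dlo', dhi']] turns
[T f x u w] into [T((Jx' + Ju' C' T)(T^-1 y)) + T(Ju' d) + T r], where [r] lies
in the interval [R]; interval arithmetic is inclusion monotone, so this real
expression lies in [Gc]. *)

Section IntervalArithmetic.
Variable R : realType.

Lemma mem_iprod (a1 a2 b1 b2 a b : R) : a1 <= a <= a2 -> b1 <= b <= b2 ->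
  (iprod (a1, a2) (b1, b2)).1 <= a * b <= (iprod (a1, a2) (b1, b2)).2.
Proof.
move=> /andP[ha1 ha2] /andP[hb1 hb2]; rewrite /iprod /= !ge_min !le_max.
have [b0|b0] := lerP 0 b; have [a10|a10] := lerP 0 a1; have [a20|a20] := lerP 0 a2;
apply/andP; split; apply/orP;
by [left; apply/orP; (left + right); nra | right; apply/orP; (left + right); nra].
Qed.

Lemma in_imx_pt m k (A : 'M[R]_(m, k)) : in_imx A (pt A).
Proof. by split. Qed.

Lemma in_imx_add m k (A B : 'M[R]_(m, k)) IA IB :
  in_imx A IA -> in_imx B IB -> in_imx (A + B) (imx_add IA IB).
Proof. by move=> [hA1 hA2] [hB1 hB2]; split => i j; rewrite !mxE lerD. Qed.

Lemma in_imx_opp m k (A : 'M[R]_(m, k)) IA :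
  in_imx A IA -> in_imx (- A) (imx_opp IA).
Proof. by move=> [hA1 hA2]; split => i j; rewrite !mxE lerN2. Qed.

Lemma in_imx_mul m l k (A : 'M[R]_(m, l)) (B : 'M[R]_(l, k)) IA IB :
  in_imx A IA -> in_imx B IB -> in_imx (A *m B) (imx_mul IA IB).
Proof.
move=> [hA1 hA2] [hB1 hB2].
have hAB i j r := mem_iprod (introT andP (conj (hA1 i r) (hA2 i r)))
                            (introT andP (conj (hB1 r j) (hB2 r j))).
by split => i j; rewrite !mxE; apply: ler_sum => r _; case/andP: (hAB i j r).
Qed.

Lemma in_box_convex m (lo hi a b : 'cV[R]_m) (t : R) :
  in_box a lo hi -> in_box b lo hi -> 0 <= t <= 1 ->
  in_box (t *: (b - a) + a) lo hi.
Proof.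
move=> [ha1 ha2] [hb1 hb2] /andP[t0 t1]; split => i j; rewrite !mxE.
  by have := ha1 i j; have := hb1 i j; nra.
by have := ha2 i j; have := hb2 i j; nra.
Qed.

Lemma local_affine_bound_range m k (N : 'cV[R]_m -> 'cV[R]_k) lo hi C dlo dhi x :
  local_affine_bound N lo hi C dlo dhi -> in_box x lo hi ->
  in_box (N x) (posm C *m lo + negm C *m hi + dlo) (negm C *m lo + posm C *m hi + dhi).
Proof.
move=> hN hx; have [hNlo hNhi] := hN x hx; have [hxlo hxhi] := hx.
have hCx i j : (posm C *m lo + negm C *m hi) i j <= (C *m x) i j
                                          <= (negm C *m lo + posm C *m hi) i j.
  rewrite !mxE -!big_split /=; apply/andP; split;
  apply: ler_sum => l _; rewrite !mxE; have := hxlo l j; have := hxhi l j;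
  by have [c0|c0] := lerP 0 (C i l); nra.
split => i j; case/andP: (hCx i j) => hlo hhi.
  by apply: le_trans (hNlo i j); move: hlo; rewrite !mxE lerD2r.
by apply: le_trans (hNhi i j) _; move: hhi; rewrite !mxE lerD2r.
Qed.

End IntervalArithmetic.

Lemma in_Rbox (R : realType) n p q (f : 'cV[R]_n -> 'cV[R]_p -> 'cV[R]_q -> 'cV[R]_n)
    Jx Ju Jw Jx' Ju' Jw' {xo uo wo} wlo whi w :
  in_imx Jx' Jx -> in_imx Ju' Ju -> in_imx Jw' Jw -> in_box w wlo whi ->
  in_imx (- (Jx' *m xo) - Ju' *m uo + Jw' *m (w - wo) + f xo uo wo)
         (Rbox f Jx Ju Jw xo uo wo wlo whi).
Proof.
move=> hJx hJu hJw hw.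
apply: in_imx_add (in_imx_pt _); apply: in_imx_add.
  by apply: in_imx_add; apply: in_imx_opp; apply: in_imx_mul (in_imx_pt _).
exact: in_imx_mul hJw (in_imx_add (hw : in_imx w (wlo, whi)) (in_imx_pt _)).
Qed.

Lemma in_Gc (R : realType) (n p : nat) {T : 'M[R]_n} (Jx : imx R n n)
    (Ju : imx R n p) Rv {C' : 'M_(p, n)} dlo' dhi' ylo yhi Jx' Ju' r d y :
  in_imx Jx' Jx -> in_imx Ju' Ju -> in_imx r Rv -> in_imx d (dlo', dhi') ->
  in_box y ylo yhi ->
  in_imx (T *m ((Jx' + Ju' *m (C' *m T)) *m (invmx T *m y)) + T *m (Ju' *m d)
          + T *m r) (Gc T Jx Ju Rv C' dlo' dhi' ylo yhi).
Proof.
move=> hJx hJu hr hd hy.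
apply: in_imx_add; last exact: in_imx_mul (in_imx_pt _) hr.
apply: in_imx_add; last exact: in_imx_mul (in_imx_pt _) (in_imx_mul hJu hd).
have hTy := in_imx_mul (in_imx_pt (invmx T)) (hy : in_imx y (ylo, yhi)).
apply: in_imx_mul (in_imx_pt _) (in_imx_mul _ hTy).
exact: in_imx_add hJx (in_imx_mul hJu (in_imx_pt _)).
Qed.

Section MeanValue.
Variable R : realType.

Lemma diff_coord m k (M H : 'M[R]_(m, k)) i j :
  'd (fun X : 'M[R]_(m, k) => X i j) M H = H i j.
Proof.
have @c : {linear 'M[R]_(m, k) -> R^o}.
  by exists (fun X : 'M[R]_(_, _) => X i j); do 2![eexists]; do ?[constructor];
     rewrite ?mxE// => ? *; rewrite ?mxE//; move=> ?; rewrite !mxE.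
rewrite (_ : (fun _ => _) = c) //.
by rewrite diff_lin //; exact: coord_continuous.
Qed.

Lemma diff_jacE m k (g : 'cV[R]_m -> 'cV[R]_k) x v : 'd g x v = jac g x *m v.
Proof.
have -> : v = \sum_(j < m) v j 0 *: delta_mx j 0.
  by rewrite [LHS]matrix_sum_delta; apply: eq_bigr => j _; rewrite big_ord1.
apply/matrixP => i j; rewrite linear_sum mulmx_sumr !summxE; apply: eq_bigr => l _.
rewrite linearZ -scalemxAr !mxE (ord1 j) (bigD1 l) //= big1 => [|r /negbTE rl].
  by rewrite !mxE !eqxx mulr1 addr0.
by rewrite !mxE rl mulr0.
Qed.

Lemma mean_value_coord (V : normedModType R) k (g : V -> 'cV[R]_k) a v i :
  (forall z, differentiable g z) ->
  exists2 t : R, 0 <= t <= 1 & (g (v + a) - g a) i 0 = ('d g (t *: v + a) v) i 0.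
Proof.
move=> dg; pose h t : V := t *: v + a; pose psi t := g (h t) i 0.
have dh t : is_diff t h ( *:%R ^~ v).
  have -> : h = ( *:%R ^~ v) + cst a by apply/funext.
  by apply: is_diff_eq (is_diffD (is_diff_scalel t v) (is_diff_cst a t)) _;
     apply/funext => s /=; rewrite addr0.
have dgh t : differentiable (g \o h) t by apply: differentiable_comp => //; exact: ex_diff.
have dpsi_diff t : differentiable psi t.
  exact: (@differentiable_comp _ _ _ _ (g \o h) (fun X : 'cV[R]_k => X i 0))
         (dgh t) (differentiable_coord _ _ _).
have dpsi (t : R) : is_derive t (1 : R) psi ('d g (h t) v i 0).
  apply: DeriveDef; first exact: diff_derivable.
  rewrite deriveE // (@diff_comp _ _ _ _ (g \o h) (fun X : 'cV[R]_k => X i 0)) //=;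
    last exact: differentiable_coord.
  by rewrite diff_coord (diff_comp ex_diff (dg _)) /= diff_val scale1r.
have cpsi : {within `[(0 : R), 1], continuous psi}.
  by apply: continuous_subspaceT => t; exact: differentiable_continuous.
have [t t01 ht] := MVT_segment ler01 (fun t _ => dpsi t) cpsi.
exists t; first by move: t01; rewrite in_itv.
by move: ht; rewrite /psi /h scale0r add0r scale1r subr0 mulr1 !mxE.
Qed.

Lemma mean_value_in_imx m k (g : 'cV[R]_m -> 'cV[R]_k) (a b : 'cV[R]_m) J :
  (forall z, differentiable g z) ->
  (forall t, 0 <= t <= 1 -> in_imx (jac g (t *: (b - a) + a)) J) ->
  exists2 M, in_imx M J & g b - g a = M *m (b - a).
Proof.
move=> dg hJ.
have /choice[t ht] i : exists t, 0 <= t <= 1 /\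
    (g b - g a) i 0 = (jac g (t *: (b - a) + a) *m (b - a)) i 0.
  have [t t01 e] := mean_value_coord a (b - a) i dg.
  by exists t; rewrite -diff_jacE -e subrK.
exists (\matrix_(i, j) jac g (t i *: (b - a) + a) i j).
  by split=> i j; rewrite mxE; case: (ht i) => /hJ[].
apply/matrixP => i j; rewrite (ord1 j) (ht i).2 !mxE.
by apply: eq_bigr => r _; rewrite [in RHS]mxE.
Qed.

End MeanValue.

Section PartialMeanValue.
Variables (R : realType) (n p q : nat).
Variable f : 'cV[R]_n -> 'cV[R]_p -> 'cV[R]_q -> 'cV[R]_n.
Hypothesis hf : C1 f.

Let F (z : 'cV[R]_n * 'cV[R]_p * 'cV[R]_q) := f z.1.1 z.1.2 z.2.

Lemma C1_differentiable_x u w x : differentiable (fun x' => f x' u w) x.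
Proof.
apply: (@differentiable_comp _ _ _ _ (fun x' => ((x', u), w)) F); last exact: hf.1.
by apply: differentiable_pair => //; apply: differentiable_pair.
Qed.

Lemma C1_differentiable_u x w u : differentiable (fun u' => f x u' w) u.
Proof.
apply: (@differentiable_comp _ _ _ _ (fun u' => ((x, u'), w)) F); last exact: hf.1.
by apply: differentiable_pair => //; apply: differentiable_pair.
Qed.

Lemma C1_differentiable_w x u w : differentiable (fun w' => f x u w') w.
Proof.
apply: (@differentiable_comp _ _ _ _ (fun w' => ((x, u), w')) F); last exact: hf.1.
exact: differentiable_pair.
Qed.

Lemma C1_mean_value_in_imx Jx Ju Jw x u w xo uo wo :
  (forall t, 0 <= t <= 1 -> in_imx (Dx f (t *: (x - xo) + xo) uo wo) Jx) ->
  (forall t, 0 <= t <= 1 -> in_imx (Du f x (t *: (u - uo) + uo) wo) Ju) ->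
  (forall t, 0 <= t <= 1 -> in_imx (Dw f x u (t *: (w - wo) + wo)) Jw) ->
  exists Jx' Ju' Jw', [/\ in_imx Jx' Jx, in_imx Ju' Ju, in_imx Jw' Jw &
    f x u w = f xo uo wo + Jx' *m (x - xo) + Ju' *m (u - uo) + Jw' *m (w - wo)].
Proof.
move=> hJx hJu hJw.
have [Jx' hJx' ex] := mean_value_in_imx (C1_differentiable_x uo wo) hJx.
have [Ju' hJu' eu] := mean_value_in_imx (C1_differentiable_u x wo) hJu.
have [Jw' hJw' ew] := mean_value_in_imx (C1_differentiable_w x u) hJw.
exists Jx', Ju', Jw'; split => //; rewrite -ex -eu -ew.
by apply/matrixP => i j; rewrite !mxE; ring.
Qed.

End PartialMeanValue.

Theorem proposition2 (R : realType) (n p q : nat)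
  (f : 'cV[R]_n -> 'cV[R]_p -> 'cV[R]_q -> 'cV[R]_n)
  (N : 'cV[R]_n -> 'cV[R]_p) (T : 'M[R]_n)
  (hf : C1 f) (hN : is_nn N) (hT : T \in unitmx)
  (zlo zhi : 'cV[R]_n) (wlo whi : 'cV[R]_q)
  (C : 'M[R]_(p, n)) (dlo dhi : 'cV[R]_p)
  (hC : local_affine_bound N zlo zhi C dlo dhi)
  (Jx : imx R n n) (Ju : imx R n p) (Jw : imx R n q)
  (hJ : forall x u w, in_box x zlo zhi ->
     in_box u (posm C *m zlo + negm C *m zhi + dlo)
              (negm C *m zlo + posm C *m zhi + dhi) ->
     in_box w wlo whi ->
     [/\ in_imx (Dx f x u w) Jx, in_imx (Du f x u w) Ju & in_imx (Dw f x u w) Jw])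
  (xo : 'cV[R]_n) (wo : 'cV[R]_q)
  (hxo : in_box xo zlo zhi) (hwo : in_box wo wlo whi) :
  let uo := N xo in
  let Rv := Rbox f Jx Ju Jw xo uo wo wlo whi in
  let N' := fun y : 'cV[R]_n => N (invmx T *m y) in
  let gc := fun (y : 'cV[R]_n) (w : 'cV[R]_q) => T *m f (invmx T *m y) (N' y) w in
  forall ylo yhi : 'cV[R]_n,
    (forall y, in_box y ylo yhi -> exists2 x, in_box x zlo zhi & y = T *m x) ->
  forall (C' : 'M[R]_(p, n)) (dlo' dhi' : 'cV[R]_p),
    local_affine_bound N' ylo yhi C' dlo' dhi' ->
  forall y w, in_box y ylo yhi -> in_box w wlo whi ->
    in_imx (gc y w) (Gc T Jx Ju Rv C' dlo' dhi' ylo yhi).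
Proof.
move=> uo Rv N' gc ylo yhi hy C' dlo' dhi' hC' y w hyb hw.
pose x := invmx T *m y; pose u := N x.
have hx : in_box x zlo zhi by rewrite /x; have [x0 hx0 ->] := hy y hyb; rewrite mulKmx.
have hu := local_affine_bound_range hC hx.
have huo := local_affine_bound_range hC hxo.
have [Jx' [Ju' [Jw' [hJx' hJu' hJw' ef]]]] := C1_mean_value_in_imx hf
  (fun t ht => let: And3 h _ _ := hJ _ _ _ (in_box_convex hxo hx ht) huo hwo in h)
  (fun t ht => let: And3 _ h _ := hJ _ _ _ hx (in_box_convex huo hu ht) hwo in h)
  (fun t ht => let: And3 _ _ h := hJ _ _ _ hx hu (in_box_convex hwo hw ht) in h).
have hd : in_imx (u - C' *m y) (dlo', dhi').
  have [hlo hhi] := hC' y hyb.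
  by split => i j; [move: (hlo i j) | move: (hhi i j)]; rewrite !mxE; lra.
have -> : gc y w = T *m ((Jx' + Ju' *m (C' *m T)) *m x) + T *m (Ju' *m (u - C' *m y))
    + T *m (- (Jx' *m xo) - Ju' *m uo + Jw' *m (w - wo) + f xo uo wo).
  rewrite /gc -/x /N' -/x -/u ef -!mulmxDr; congr (T *m _).
  rewrite mulmxDl -!mulmxA (mulmxA T) mulmxV // mul1mx !mulmxBr.
  by apply/matrixP => i j; rewrite !mxE; ring.
exact: in_Gc hJx' hJu' (in_Rbox f hJx' hJu' hJw' hw) hd hyb.
Qed.
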